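(* Let $(X,L_1,\dots,L_n)$ have any joint distribution with $X$ finitely supported, $L_i\in\{0,1\}$, and $\Pr(L_i=0\mid X=x)>0$ for all $i$ and all $x$ in the support of $X$. Let $\pi$ be a collaborating cryptogenography protocol and $T$ its full transcript. Then \[ I(X;T)\le\sum_{i=1}^n\bigl(\mathrm{susp}_i(X,T)-\mathrm{susp}_i(X)\bigr). \]
   Context: All logarithms are base $2$. Collaborating cryptogenography protocol: there are $n$ players $\mathrm{plr}_1,\dots,\mathrm{plr}_n$; a secret $X$ (finitely supported) and indicators $L_1,\dots,L_n\in\{0,1\}$ ($L_i=1$ means $\mathrm{plr}_i$ knows $X$) have a joint distribution. A protocol $\pi$ specifies, for every possible partial transcript $t^k=(t_1,\dots,t_k)$ (the tuple of the first $k$ messages): whether communication stops; if not, which player $\mathrm{plr}_i$ sends the next message; and probability distributions $p_?$ and $(p_x)_{x}$ on a finite message set (depending on $t^k$). $\mathrm{plr}_i$ draws the next message, with fresh independent randomness, from $p_?$ if $L_i=0$ and from $p_x$ if $L_i=1$ and $X=x$. There is a number $\mathrm{length}(\pi)$ such that the protocol always stops after at most that many messages. $T$ denotes the random full transcript. Suspicion of player $i$: for a random variable $Y$ (possibly a tuple) and $y$ with $\Pr(Y=y)>0$, $\mathrm{susp}_i(Y=y)=-\log\Pr(L_i=0\mid Y=y)\in[0,\infty]$ and $\mathrm{susp}_i(Y)=\sum_y\Pr(Y=y)\mathrm{susp}_i(Y=y)$. *)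

From HB Require Import structures.
From Stdlib Require Import Reals.
From mathcomp Require Import all_boot.

Set Implicit Arguments.
Unset Strict Implicit.
Unset Printing Implicit Defensive.

HB.instance Definition _ :=
  Monoid.isComLaw.Build R R0 Rplus
    (fun a b c => esym (Rplus_assoc a b c)) Rplus_comm Rplus_0_l.

Open Scope R_scope.

Definition log2 (x : R) : R := ln x / ln 2.

Definition is_dist (T : finType) (p : T -> R) : Prop :=
  (forall t, 0 <= p t) /\ \big[Rplus/R0]_(t : T) p t = 1.

Definition prob (O : finType) (P : O -> R) (A : pred O) : R :=
  \big[Rplus/R0]_(w | A w) P w.

Definition cprob (O : finType) (P : O -> R) (A B : pred O) : R :=
  prob P (fun w => A w && B w) / prob P B.

Inductive xR := Fin of R | Inf.

Definition xadd (a b : xR) : xR :=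
  match a, b with Fin x, Fin y => Fin (x + y) | _, _ => Inf end.

(* a - b; only used when b is finite ((+oo) - finite = +oo);
   the value for b = Inf is junk (never used under the hypotheses). *)
Definition xsub (a b : xR) : xR :=
  match a, b with
  | Fin x, Fin y => Fin (x - y)
  | Inf, Fin _ => Inf
  | _, Inf => Fin 0
  end.

Definition xscale (r : R) (a : xR) : xR :=
  match a with Fin x => Fin (r * x) | Inf => Inf end.

Definition xle (a b : xR) : Prop :=
  match a, b with
  | Fin x, Fin y => x <= y
  | _, Inf => True
  | Inf, Fin _ => False
  end.

Definition xsum (T : finType) (f : T -> xR) : xR :=
  foldr xadd (Fin 0) (map f (enum T)).

Definition susp_at (O : finType) (P : O -> R) (Li : O -> bool)
    (YT : finType) (Y : O -> YT) (y : YT) : xR :=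
  let q := cprob P (fun w => ~~ Li w) (fun w => Y w == y) in
  if Req_EM_T q 0 then Inf else Fin (- log2 q).

Definition susp (O : finType) (P : O -> R) (Li : O -> bool)
    (YT : finType) (Y : O -> YT) : xR :=
  xsum (fun y : YT =>
    let py := prob P (fun w => Y w == y) in
    if Rlt_dec 0 py then xscale py (susp_at P Li Y y) else Fin 0).

Definition mutinf (O : finType) (P : O -> R) (XT YT : finType)
    (X : O -> XT) (Y : O -> YT) : R :=
  \big[Rplus/R0]_(xy : XT * YT)
    (let pxy := prob P (fun w => (X w == xy.1) && (Y w == xy.2)) in
     let px := prob P (fun w => X w == xy.1) in
     let py := prob P (fun w => Y w == xy.2) in
     if Rlt_dec 0 pxy then pxy * log2 (pxy / (px * py)) else 0).

(* A protocol with n players, secrets in XT and messages in M maps each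
   partial transcript to None (stop) or Some (i, p_?, p_x): player i speaks,
   drawing the next message from p_? if it does not know X, and from p_x
   if it knows X = x. *)
Definition protocol (n : nat) (XT M : finType) :=
  seq M -> option ('I_n * (M -> R) * (XT -> M -> R)).

Definition protocol_wf (n : nat) (XT M : finType) (pi : protocol n XT M) :=
  forall h i pq px, pi h = Some (i, pq, px) ->
    is_dist pq /\ forall x, is_dist (px x).

Definition protocol_length_le (n : nat) (XT M : finType)
    (pi : protocol n XT M) (N : nat) :=
  forall h : seq M, (N <= size h)%N -> pi h = None.

(* Pr(T = h ++ rest | X = x, L = l), given the partial transcript h *)
Fixpoint trans_prob_from (n : nat) (XT M : finType) (pi : protocol n XT M)
    (x : XT) (l : {ffun 'I_n -> bool}) (h rest : seq M) : R :=
  match rest with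
  | [::] => if pi h is None then 1 else 0
  | m :: rest' =>
      match pi h with
      | None => 0
      | Some (i, pq, px) =>
          (if l i then px x m else pq m) * trans_prob_from pi x l (rcons h m) rest'
      end
  end.

Definition trans_prob (n : nat) (XT M : finType) (pi : protocol n XT M)
    (x : XT) (l : {ffun 'I_n -> bool}) (t : seq M) : R :=
  trans_prob_from pi x l [::] t.

Definition transcript (M : finType) (N : nat) := {k : 'I_N.+1 & k.-tuple M}.
Definition tr_seq (M : finType) (N : nat) (t : transcript M N) : seq M :=
  tagged t.

Definition omega (n : nat) (XT M : finType) (N : nat) :=
  (XT * {ffun 'I_n -> bool} * transcript M N)%type.

Definition jointP (n : nat) (XT M : finType) (N : nat)
    (PXL : XT -> {ffun 'I_n -> bool} -> R) (pi : protocol n XT M)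
    (w : omega n XT M N) : R :=
  PXL w.1.1 w.1.2 * trans_prob pi w.1.1 w.1.2 (tr_seq w.2).

Definition rvX (n : nat) (XT M : finType) (N : nat) (w : omega n XT M N) : XT :=
  w.1.1.
Definition rvT (n : nat) (XT M : finType) (N : nat) (w : omega n XT M N)
  : transcript M N := w.2.
Definition rvXT (n : nat) (XT M : finType) (N : nat) (w : omega n XT M N)
  : (XT * transcript M N)%type := (w.1.1, w.2).
Definition rvL (n : nat) (XT M : finType) (N : nat) (i : 'I_n)
    (w : omega n XT M N) : bool := w.1.2 i.

(* Work in nats and allow an arbitrary nonnegative weight Q on
   (X, L) in place of the prior.  Define the potential
     potential Q pi = [I(X;T) - sum_i susp_i(X,T)] + [sum_i susp_i(X)]
   written with unnormalised masses (plus a term Z ln Z for the total mass Z,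
   which vanishes for a probability distribution).  We show potential <= 0 by
   induction on the length of the protocol.  If the protocol stops at once the
   potential is 0.  Otherwise the speaker i sends a first message m, which
   turns Q into the weight Q_m(x, l) = Q(x, l) Pr(m | x, l) and pi into the
   residual protocol after m; the posterior part of the potential splits
   exactly as a sum over m, while the prior part can only grow: for players
   j <> i by the data-processing (log-sum) inequality, and for the speaker
   because Pr(m | L_i = 0) does not depend on X, again by the log-sum
   inequality. *)

From HB Require Import structures.
From Stdlib Require Import Reals Lra Classical.
From mathcomp Require Import all_boot.
Open Scope R_scope.

Set Implicit Arguments.
Unset Strict Implicit.

Section RealSums.
Variable I : Type.
Implicit Types (r : seq I) (P : pred I) (F G : I -> R).

Lemma sumR_le r P F G :
  (forall i, P i -> F i <= G i) ->
  \big[Rplus/0]_(i <- r | P i) F i <= \big[Rplus/0]_(i <- r | P i) G i.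
Proof. by move=> H; apply: (big_ind2 (fun a b => a <= b)) => *; [lra | lra | exact: H]. Qed.

Lemma sumR_ge0 r P F :
  (forall i, P i -> 0 <= F i) -> 0 <= \big[Rplus/0]_(i <- r | P i) F i.
Proof. by move=> H; apply: (big_ind (fun a => 0 <= a)) => *; [lra | lra | exact: H]. Qed.

Lemma sumR_le0 r P F :
  (forall i, P i -> F i <= 0) -> \big[Rplus/0]_(i <- r | P i) F i <= 0.
Proof. by move=> H; apply: (big_ind (fun a => a <= 0)) => *; [lra | lra | exact: H]. Qed.

Lemma sumR_scale r P F c :
  c * \big[Rplus/0]_(i <- r | P i) F i = \big[Rplus/0]_(i <- r | P i) (c * F i).
Proof. by apply: (big_rec2 (fun a b => c * a = b)) => [|i a b _ <-]; ring. Qed.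

Lemma sumR_scaler r P F c :
  (\big[Rplus/0]_(i <- r | P i) F i) * c = \big[Rplus/0]_(i <- r | P i) (F i * c).
Proof. by rewrite Rmult_comm sumR_scale; apply: eq_bigr => i _; ring. Qed.

Lemma sumR_opp r P F :
  \big[Rplus/0]_(i <- r | P i) (- F i) = - \big[Rplus/0]_(i <- r | P i) F i.
Proof. by apply: (big_rec2 (fun a b => a = - b)) => [|i a b _ ->]; ring. Qed.

Lemma sumR_sub r P F G :
  \big[Rplus/0]_(i <- r | P i) (F i - G i) =
  \big[Rplus/0]_(i <- r | P i) F i - \big[Rplus/0]_(i <- r | P i) G i.
Proof. by rewrite /Rminus big_split sumR_opp. Qed.

Lemma sumR_pos_ex r P F :
  0 < \big[Rplus/0]_(i <- r | P i) F i -> exists i, P i /\ 0 < F i.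
Proof.
move=> Hpos; apply: NNPP => Hnone.
suff : \big[Rplus/0]_(i <- r | P i) F i <= 0 by lra.
by apply: sumR_le0 => i Pi; apply: Rnot_lt_le => Fi; apply: Hnone; exists i.
Qed.
End RealSums.

Section RealSumsFin.
Variable I : finType.

Lemma sumR_term_le (P : pred I) (F : I -> R) j :
  (forall i, P i -> 0 <= F i) -> P j -> F j <= \big[Rplus/0]_(i | P i) F i.
Proof.
move=> H Pj; rewrite (bigD1 j) //=.
have : 0 <= \big[Rplus/0]_(i | P i && (i != j)) F i.
  by apply: sumR_ge0 => i /andP [Pi _]; exact: H.
lra.
Qed.

Lemma sumR_pos (P : pred I) (F : I -> R) j :
  (forall i, P i -> 0 <= F i) -> P j -> 0 < F j -> 0 < \big[Rplus/0]_(i | P i) F i.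
Proof. by move=> H Pj Fj; apply: Rlt_le_trans Fj (sumR_term_le H Pj). Qed.

Lemma sumR_single (a : I) (F : I -> R) :
  (forall i, i != a -> F i = 0) -> \big[Rplus/0]_(i : I) F i = F a.
Proof. by move=> H; rewrite (bigD1 a) //= big1 ?Rplus_0_r // => i /andP [_ /H]. Qed.
End RealSumsFin.

Lemma prod_pos a b : 0 <= a -> 0 <= b -> 0 < a * b -> 0 < a /\ 0 < b.
Proof.
move=> ha hb hab; split.
- by case: (Rle_lt_or_eq_dec _ _ ha) => // h; rewrite -h Rmult_0_l in hab; lra.
- by case: (Rle_lt_or_eq_dec _ _ hb) => // h; rewrite -h Rmult_0_r in hab; lra.
Qed.

Lemma ln_le_sub1 z : 0 < z -> ln z <= z - 1.
Proof. by move=> hz; have := exp_ineq1_le (ln z); rewrite exp_ln //; lra. Qed.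

(* Termwise form of the log-sum inequality, from ln z <= z - 1 with
   z = b A / (a B); summing over i makes the right-hand side vanish. *)
Lemma log_sum_term a b A B : 0 <= a -> 0 <= b -> (0 < a -> 0 < b) -> 0 < A -> 0 < B ->
  a * (ln b - ln a) - a * (ln B - ln A) <= b * A / B - a.
Proof.
move=> ha hb hab hA hB; case: (Rle_lt_or_eq_dec 0 a ha) => [apos|<-]; last first.
  have : 0 <= b * A / B.
    by apply: Rmult_le_pos; [apply: Rmult_le_pos; lra | apply: Rlt_le; apply: Rinv_0_lt_compat].
  lra.
have bpos := hab apos.
have z0 : 0 < b * A / (a * B) by apply: Rdiv_lt_0_compat; apply: Rmult_lt_0_compat.
have := Rmult_le_compat_l a _ _ ha (ln_le_sub1 z0).
rewrite /Rdiv ln_mult; last by apply: Rinv_0_lt_compat; apply: Rmult_lt_0_compat.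
  2: by apply: Rmult_lt_0_compat.
rewrite ln_mult // ln_Rinv; last by apply: Rmult_lt_0_compat.
have -> : a * (b * A * / (a * B) - 1) = b * A * / B - a by field; lra.
rewrite ln_mult //; lra.
Qed.

Lemma log_sum_ineq (I : finType) (a b : I -> R) :
  (forall i, 0 <= a i) -> (forall i, 0 <= b i) -> (forall i, 0 < a i -> 0 < b i) ->
  \big[Rplus/0]_(i : I) (a i * (ln (b i) - ln (a i))) <=
  (\big[Rplus/0]_(i : I) a i) *
    (ln (\big[Rplus/0]_(i : I) b i) - ln (\big[Rplus/0]_(i : I) a i)).
Proof.
move=> ha hb hab.
set A := \big[Rplus/0]_(i : I) a i; set B := \big[Rplus/0]_(i : I) b i.
have A0 : 0 <= A by apply: sumR_ge0.
case: (Rle_lt_or_eq_dec 0 A A0) => [Apos|A0e]; last first.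
  have a0 i : a i = 0.
    have := @sumR_term_le _ xpredT a i (fun i _ => ha i) erefl.
    by rewrite -/A -A0e; have := ha i; lra.
  by rewrite -A0e Rmult_0_l big1 //; [lra | move=> i _; rewrite a0; ring].
have [j [_ aj]] := sumR_pos_ex Apos.
have Bpos : 0 < B by apply: (@sumR_pos _ xpredT _ j) => //; exact: hab.
have := @sumR_le _ (index_enum I) xpredT _ _
  (fun i _ => log_sum_term (ha i) (hb i) (@hab i) Apos Bpos).
rewrite !sumR_sub -sumR_scaler -/A.
have -> : \big[Rplus/0]_(i : I) (b i * A / B) = A.
  transitivity ((A / B) * B); last by field; lra.
  by rewrite /B sumR_scale; apply: eq_bigr => i _; rewrite /Rdiv; ring.
lra.
Qed.

Section Protocols.
Variables (n : nat) (XT M : finType).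
Notation L := {ffun 'I_n -> bool}.
Notation proto := (protocol n XT M).

Fixpoint seqs_upto (N : nat) : seq (seq M) :=
  [::] :: (if N is N'.+1 then [seq m :: s | m <- index_enum M, s <- seqs_upto N']
           else [::]).

Lemma mem_seqs_upto N t : (t \in seqs_upto N) = (size t <= N)%N.
Proof.
elim: N t => [|N IH] [|m t] //=; rewrite in_cons /=; apply/allpairsP/idP.
  by move=> [[m' s] [_ hs [_ ->]]]; rewrite ltnS -IH.
by move=> h; exists (m, t); split => //; rewrite /= IH -ltnS.
Qed.

Lemma uniq_seqs_upto N : uniq (seqs_upto N).
Proof.
elim: N => [|N IH] //=; apply/andP; split; first by apply/allpairsP => [[[m s] []]].
apply: allpairs_uniq => //; first exact: index_enum_uniq.
by move=> [m1 s1] [m2 s2] _ _ /= [-> ->].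
Qed.

Lemma sum_seqs_upto_S N (F : seq M -> R) :
  \big[Rplus/0]_(t <- seqs_upto N.+1) F t =
  F [::] + \big[Rplus/0]_(m : M) \big[Rplus/0]_(t <- seqs_upto N) F (m :: t).
Proof. by rewrite /= big_cons big_allpairs_dep. Qed.

Lemma sum_seqs_upto_nil N (F : seq M -> R) :
  (forall m t, F (m :: t) = 0) -> \big[Rplus/0]_(t <- seqs_upto N) F t = F [::].
Proof.
move=> F0; case: N => [|N]; first by rewrite /= big_cons big_nil Rplus_0_r.
by rewrite sum_seqs_upto_S big1 ?Rplus_0_r // => m _; rewrite big1.
Qed.

Lemma tr_seq_inj N : injective (@tr_seq M N).
Proof.
move=> [k1 t1] [k2 t2]; rewrite /tr_seq /= => e.
have ek : k1 = k2 by apply: val_inj; rewrite /= -(size_tuple t1) -(size_tuple t2) e.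
by subst k2; congr existT; apply: val_inj.
Qed.

Definition mk_tr N (t : seq M) (ht : (size t < N.+1)%N) : transcript M N :=
  existT (fun k : 'I_N.+1 => k.-tuple M) (Ordinal ht) (in_tuple t).

Lemma sum_transcripts N (F : seq M -> R) :
  \big[Rplus/0]_(tt : transcript M N) F (tr_seq tt) =
  \big[Rplus/0]_(t <- seqs_upto N) F t.
Proof.
rewrite -(big_map (@tr_seq M N) xpredT F); apply: perm_big; apply: uniq_perm.
- by rewrite map_inj_uniq ?index_enum_uniq //; exact: tr_seq_inj.
- exact: uniq_seqs_upto.
move=> t; rewrite mem_seqs_upto; apply/mapP/idP.
  by move=> [[k tt] _ ->] /=; rewrite size_tuple -ltnS.
by move=> ht; exists (mk_tr ht) => //; exact: mem_index_enum.
Qed.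

Definition after (pi : proto) (m : M) : proto := fun h => pi (m :: h).

Definition msg_prob (i : 'I_n) (pq : M -> R) (px : XT -> M -> R)
    (m : M) (x : XT) (l : L) : R :=
  if l i then px x m else pq m.

Lemma after_wf (pi : proto) m : protocol_wf pi -> protocol_wf (after pi m).
Proof. by move=> wf h; exact: wf. Qed.

Lemma after_len (pi : proto) m N :
  protocol_length_le pi N.+1 -> protocol_length_le (after pi m) N.
Proof. by move=> len h hs; apply: len. Qed.

Lemma trans_prob_from_cons (pi : proto) x l m h t :
  trans_prob_from pi x l (m :: h) t = trans_prob_from (after pi m) x l h t.
Proof.
elim: t h => [|m' t IH] h //=; rewrite /after /=.
by case: (pi (m :: h)) => [[[i pq] px]|] //; rewrite IH.
Qed.

Lemma trans_prob_nil (pi : proto) x l :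
  trans_prob pi x l [::] = if pi [::] is None then 1 else 0.
Proof. by []. Qed.

Lemma trans_prob_cons (pi : proto) x l m t :
  trans_prob pi x l (m :: t) =
  if pi [::] is Some (i, pq, px)
  then msg_prob i pq px m x l * trans_prob (after pi m) x l t else 0.
Proof.
rewrite /trans_prob /=.
by case: (pi [::]) => [[[i pq] px]|] //; rewrite trans_prob_from_cons.
Qed.

Section Speaker.
Variables (i : 'I_n) (pq : M -> R) (px : XT -> M -> R).
Hypotheses (pq_dist : is_dist pq) (px_dist : forall x, is_dist (px x)).

Lemma msg_prob_ge0 m x l : 0 <= msg_prob i pq px m x l.
Proof. by rewrite /msg_prob; case: (l i); [case: (px_dist x) | case: pq_dist]. Qed.

Lemma msg_prob_sum1 x l : \big[Rplus/0]_(m : M) msg_prob i pq px m x l = 1.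
Proof. by rewrite /msg_prob; case: (l i); [case: (px_dist x) | case: pq_dist]. Qed.
End Speaker.

Lemma trans_prob_ge0 (pi : proto) x l t : protocol_wf pi -> 0 <= trans_prob pi x l t.
Proof.
elim: t pi => [|m t IH] pi wf.
  by rewrite trans_prob_nil; case: (pi [::]) => *; lra.
rewrite trans_prob_cons; case e: (pi [::]) => [[[i pq] px]|]; last lra.
have [pq_dist px_dist] := wf _ _ _ _ e.
apply: Rmult_le_pos; first exact: msg_prob_ge0.
by apply: IH; exact: after_wf.
Qed.

Lemma trans_prob_sum1 N (pi : proto) x l :
  protocol_wf pi -> protocol_length_le pi N ->
  \big[Rplus/0]_(t <- seqs_upto N) trans_prob pi x l t = 1.
Proof.
elim: N pi => [|N IH] pi wf len.
  by rewrite /= big_cons big_nil trans_prob_nil len //; lra.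
rewrite sum_seqs_upto_S trans_prob_nil.
case e: (pi [::]) => [[[i pq] px]|]; last first.
  by rewrite big1 ?Rplus_0_r // => m _; rewrite big1 // => t _; rewrite trans_prob_cons e.
have [pq_dist px_dist] := wf _ _ _ _ e.
rewrite Rplus_0_l -(msg_prob_sum1 i pq_dist px_dist x l); apply: eq_bigr => m _.
under eq_bigr do rewrite trans_prob_cons e.
by rewrite -sumR_scale IH ?Rmult_1_r //; [exact: after_wf | exact: after_len].
Qed.

Lemma trans_prob_long (pi : proto) N x l t :
  protocol_length_le pi N -> (N < size t)%N -> trans_prob pi x l t = 0.
Proof.
elim: t pi N => [|m t IH] pi N len //= hs.
rewrite trans_prob_cons; case e: (pi [::]) => [[[i pq] px]|] //.
case: N len hs => [|N] len hs; first by rewrite len in e.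
by rewrite (IH _ N) ?Rmult_0_r //; exact: after_len.
Qed.
End Protocols.

Section Potential.
Variables (n : nat) (XT M : finType).
Notation L := {ffun 'I_n -> bool}.
Notation proto := (protocol n XT M).
Implicit Types (Q : XT -> L -> R) (pi : proto).

Definition massX Q x := \big[Rplus/0]_(l : L) Q x l.
Definition massXi Q j x := \big[Rplus/0]_(l : L | ~~ l j) Q x l.
Definition total_mass Q := \big[Rplus/0]_(x : XT) massX Q x.
Definition massXT Q pi x t := \big[Rplus/0]_(l : L) (Q x l * trans_prob pi x l t).
Definition massXTi Q pi j x t :=
  \big[Rplus/0]_(l : L | ~~ l j) (Q x l * trans_prob pi x l t).
Definition massT Q pi t := \big[Rplus/0]_(x : XT) massXT Q pi x t.

(* Every player who may be ignorant of X given (X, T) = (x, t) keeps a positive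
   probability of ignorance: all suspicions susp_j(X, T) are finite. *)
Definition susp_finite Q pi :=
  forall x j t, 0 < massXT Q pi x t -> 0 < massXTi Q pi j x t.

(* The potential, in nats: the contribution of (x, t) to
   I(X;T) - sum_j susp_j(X,T), and the contribution of the prior to
   sum_j susp_j(X) (plus the normalisation term Z ln Z).  Its sign, for Q a
   probability distribution, is the theorem. *)
Definition post_gap Q pi x t :=
  massXT Q pi x t * (ln (massXT Q pi x t) - ln (massT Q pi t)
    - \big[Rplus/0]_(j < n) (ln (massXT Q pi x t) - ln (massXTi Q pi j x t))).
Definition negentX Q := \big[Rplus/0]_(x : XT) (massX Q x * ln (massX Q x)).
Definition suspX Q j :=
  \big[Rplus/0]_(x : XT) (massX Q x * (ln (massX Q x) - ln (massXi Q j x))).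
Definition prior_gap Q :=
  - negentX Q + \big[Rplus/0]_(j < n) suspX Q j + total_mass Q * ln (total_mass Q).
Definition potential Q pi N :=
  \big[Rplus/0]_(x : XT) \big[Rplus/0]_(t <- seqs_upto M N) post_gap Q pi x t
  + prior_gap Q.

Section Masses.
Variables (Q : XT -> L -> R) (pi : proto).
Hypotheses (Q_ge0 : forall x l, 0 <= Q x l) (wf : protocol_wf pi).

Lemma massX_ge0 x : 0 <= massX Q x.
Proof. by apply: sumR_ge0. Qed.
Lemma massXi_ge0 j x : 0 <= massXi Q j x.
Proof. by apply: sumR_ge0. Qed.
Lemma total_mass_ge0 : 0 <= total_mass Q.
Proof. by apply: sumR_ge0 => x _; exact: massX_ge0. Qed.
Lemma massXT_ge0 x t : 0 <= massXT Q pi x t.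
Proof. by apply: sumR_ge0 => l _; apply: Rmult_le_pos => //; exact: trans_prob_ge0. Qed.
Lemma massXTi_ge0 j x t : 0 <= massXTi Q pi j x t.
Proof. by apply: sumR_ge0 => l _; apply: Rmult_le_pos => //; exact: trans_prob_ge0. Qed.

Lemma sum_massXT N x : protocol_length_le pi N ->
  \big[Rplus/0]_(t <- seqs_upto M N) massXT Q pi x t = massX Q x.
Proof.
move=> len; rewrite /massXT exchange_big; apply: eq_bigr => l _.
by rewrite -sumR_scale trans_prob_sum1 // Rmult_1_r.
Qed.

Lemma massXi_pos N : protocol_length_le pi N -> susp_finite Q pi ->
  forall x j, 0 < massX Q x -> 0 < massXi Q j x.
Proof.
move=> len fin x j; rewrite -(sum_massXT x len) => /sumR_pos_ex [t [_ /(fin x j)]].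
move=> /sumR_pos_ex [l [lj pos]]; apply: (@sumR_pos _ (fun l : L => ~~ l j) _ l) => //.
by have [] := prod_pos (Q_ge0 x l) (trans_prob_ge0 x l t wf) pos.
Qed.
End Masses.

Lemma potential_stopped Q pi N : pi [::] = None -> potential Q pi N = 0.
Proof.
move=> e.
have mXT x t : massXT Q pi x t = if t is [::] then massX Q x else 0.
  case: t => [|m t]; rewrite /massXT.
  - by apply: eq_bigr => l _; rewrite trans_prob_nil e; ring.
  - by apply: big1 => l _; rewrite trans_prob_cons e; ring.
have mXTi j x : massXTi Q pi j x [::] = massXi Q j x.
  by apply: eq_bigr => l _; rewrite trans_prob_nil e; ring.
have mT : massT Q pi [::] = total_mass Q by apply: eq_bigr => x _; rewrite mXT.
rewrite /potential /prior_gap (eq_bigr (fun x => post_gap Q pi x [::])); last first.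
  by move=> x _; apply: sum_seqs_upto_nil => m t; rewrite /post_gap mXT Rmult_0_l.
rewrite /post_gap mT.
under eq_bigr => x _ do (rewrite mXT; under eq_bigr do rewrite mXTi).
under eq_bigr do rewrite !Rmult_minus_distr_l sumR_scale.
rewrite !sumR_sub exchange_big /= -sumR_scaler /negentX /suspX /total_mass; ring.
Qed.

Definition update Q i pq px (m : M) : XT -> L -> R :=
  fun x l => Q x l * msg_prob i pq px m x l.

Section FirstMessage.
Variables (Q : XT -> L -> R) (pi : proto) (i : 'I_n) (pq : M -> R) (px : XT -> M -> R).
Hypothesis e : pi [::] = Some (i, pq, px).
Notation Q_ m := (update Q i pq px m).

Lemma massXT_cons x m t : massXT Q pi x (m :: t) = massXT (Q_ m) (after pi m) x t.
Proof. by apply: eq_bigr => l _; rewrite trans_prob_cons e /update; ring. Qed.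
Lemma massXTi_cons j x m t :
  massXTi Q pi j x (m :: t) = massXTi (Q_ m) (after pi m) j x t.
Proof. by apply: eq_bigr => l _; rewrite trans_prob_cons e /update; ring. Qed.
Lemma massT_cons m t : massT Q pi (m :: t) = massT (Q_ m) (after pi m) t.
Proof. by apply: eq_bigr => x _; exact: massXT_cons. Qed.

Lemma post_part_step N :
  \big[Rplus/0]_(x : XT) \big[Rplus/0]_(t <- seqs_upto M N.+1) post_gap Q pi x t =
  \big[Rplus/0]_(m : M) \big[Rplus/0]_(x : XT)
     \big[Rplus/0]_(t <- seqs_upto M N) post_gap (Q_ m) (after pi m) x t.
Proof.
rewrite [RHS]exchange_big /=; apply: eq_bigr => x _; rewrite sum_seqs_upto_S.
have -> : post_gap Q pi x [::] = 0.
  rewrite /post_gap (_ : massXT Q pi x [::] = 0) ?Rmult_0_l //.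
  by apply: big1 => l _; rewrite trans_prob_nil e; ring.
rewrite Rplus_0_l; apply: eq_bigr => m _; apply: eq_bigr => t _.
rewrite /post_gap massXT_cons massT_cons; congr (_ * (_ - _ - _)).
by apply: eq_bigr => j _; rewrite massXTi_cons.
Qed.

Lemma susp_finite_after m : susp_finite Q pi -> susp_finite (Q_ m) (after pi m).
Proof. by move=> fin x j t; rewrite -massXT_cons -massXTi_cons; exact: fin. Qed.
End FirstMessage.
End Potential.

Section PriorStep.
Variables (n : nat) (XT M : finType).
Notation L := {ffun 'I_n -> bool}.
Variables (Q : XT -> L -> R) (i : 'I_n) (pq : M -> R) (px : XT -> M -> R).
Hypotheses (Q_ge0 : forall x l, 0 <= Q x l)
  (pq_dist : is_dist pq) (px_dist : forall x, is_dist (px x)).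
Notation Q_ m := (update Q i pq px m).
Hypothesis update_fin :
  forall m x j, 0 < massX (Q_ m) x -> 0 < massXi (Q_ m) j x.

Lemma update_ge0 m x l : 0 <= Q_ m x l.
Proof. by apply: Rmult_le_pos => //; exact: msg_prob_ge0. Qed.

Lemma sum_massX_update x : \big[Rplus/0]_(m : M) massX (Q_ m) x = massX Q x.
Proof.
rewrite /massX exchange_big; apply: eq_bigr => l _.
by rewrite /update -sumR_scale (msg_prob_sum1 i pq_dist px_dist) Rmult_1_r.
Qed.

Lemma sum_massXi_update j x : \big[Rplus/0]_(m : M) massXi (Q_ m) j x = massXi Q j x.
Proof.
rewrite /massXi exchange_big; apply: eq_bigr => l _.
by rewrite /update -sumR_scale (msg_prob_sum1 i pq_dist px_dist) Rmult_1_r.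
Qed.

Lemma sum_total_mass_update : \big[Rplus/0]_(m : M) total_mass (Q_ m) = total_mass Q.
Proof. by rewrite /total_mass exchange_big; apply: eq_bigr => x _; exact: sum_massX_update. Qed.

(* When L_i = 0 the speaker draws m from p_?, independently of X. *)
Lemma massXi_update_speaker m x : massXi (Q_ m) i x = pq m * massXi Q i x.
Proof.
rewrite /massXi sumR_scale; apply: eq_bigr => l /negbTE li.
by rewrite /update /msg_prob li; ring.
Qed.

Lemma suspX_update j : suspX Q j <= \big[Rplus/0]_(m : M) suspX (Q_ m) j.
Proof.
rewrite /suspX exchange_big; apply: sumR_le => x _.
rewrite (_ : \big[Rplus/0]_(m : M) _ = - \big[Rplus/0]_(m : M)
   (massX (Q_ m) x * (ln (massXi (Q_ m) j x) - ln (massX (Q_ m) x)))); last first.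
  by rewrite -sumR_opp; apply: eq_bigr => m _; ring.
have hX m : 0 <= massX (Q_ m) x by apply: massX_ge0 => y l; exact: update_ge0.
have hXi m : 0 <= massXi (Q_ m) j x by apply: massXi_ge0 => y l; exact: update_ge0.
have := log_sum_ineq hX hXi (fun m => @update_fin m x j).
by rewrite sum_massX_update sum_massXi_update; lra.
Qed.

(* The speaker's prior suspicion after m, using Q_m(x, L_i = 0) = pq m Q(x, L_i = 0). *)
Lemma suspX_update_speaker m : suspX (Q_ m) i =
  negentX (Q_ m) - total_mass (Q_ m) * ln (pq m)
  - \big[Rplus/0]_(x : XT) (massX (Q_ m) x * ln (massXi Q i x)).
Proof.
rewrite /negentX /total_mass sumR_scaler -!sumR_sub; apply: eq_bigr => x _.
case: (Rle_lt_or_eq_dec _ _ (massX_ge0 (update_ge0 m) x)) => [hx|<-]; last ring.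
have := update_fin i hx; rewrite massXi_update_speaker => hprod.
have [hq hi] := prod_pos (proj1 pq_dist m) (massXi_ge0 Q_ge0 i x) hprod.
by rewrite ln_mult //; ring.
Qed.

(* The speaker's own suspicion: what the message reveals about X is paid for
   by the suspicion it raises about the speaker. *)
Lemma speaker_step :
  - negentX Q + suspX Q i + total_mass Q * ln (total_mass Q) <=
  \big[Rplus/0]_(m : M)
    (- negentX (Q_ m) + suspX (Q_ m) i + total_mass (Q_ m) * ln (total_mass (Q_ m))).
Proof.
have -> : suspX Q i =
    negentX Q - \big[Rplus/0]_(x : XT) (massX Q x * ln (massXi Q i x)).
  by rewrite /suspX /negentX -sumR_sub; apply: eq_bigr => x _; ring.
rewrite (eq_bigr (fun m => total_mass (Q_ m) * (ln (total_mass (Q_ m)) - ln (pq m))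
     - \big[Rplus/0]_(x : XT) (massX (Q_ m) x * ln (massXi Q i x)))); last first.
  by move=> m _; rewrite suspX_update_speaker; ring.
rewrite sumR_sub exchange_big /=.
under [X in _ <= _ - X]eq_bigr do rewrite -sumR_scaler sum_massX_update.
have pq_pos m : 0 < total_mass (Q_ m) -> 0 < pq m.
  move=> /sumR_pos_ex [x [_ /(update_fin i)]]; rewrite massXi_update_speaker.
  by move=> /(prod_pos (proj1 pq_dist m) (massXi_ge0 Q_ge0 i x)) [].
have := @log_sum_ineq M (fun m => total_mass (Q_ m)) pq.
rewrite sum_total_mass_update (proj2 pq_dist) ln_1 => /(_ _ (proj1 pq_dist) pq_pos).
have tot_ge0 m : 0 <= total_mass (Q_ m) by apply: total_mass_ge0 => x l; exact: update_ge0.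
move=> /(_ tot_ge0).
rewrite (_ : \big[Rplus/0]_(m : M) _ = - \big[Rplus/0]_(m : M)
   (total_mass (Q_ m) * (ln (total_mass (Q_ m)) - ln (pq m)))); first lra.
by rewrite -sumR_opp; apply: eq_bigr => m _; ring.
Qed.

Lemma prior_gap_step : prior_gap Q <= \big[Rplus/0]_(m : M) prior_gap (Q_ m).
Proof.
rewrite /prior_gap !big_split sumR_opp /= [X in _ <= _ + X + _]exchange_big /=.
rewrite (bigD1 i) //= [X in _ <= _ + X + _](bigD1 i) //=.
have := speaker_step; rewrite !big_split sumR_opp /=.
have : \big[Rplus/0]_(j < n | j != i) suspX Q j <=
       \big[Rplus/0]_(j < n | j != i) \big[Rplus/0]_(m : M) suspX (Q_ m) j.
  by apply: sumR_le => j _; exact: suspX_update.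
set others := \big[Rplus/0]_(j < n | j != i) suspX Q j.
set others_m := \big[Rplus/0]_(j < n | j != i) \big[Rplus/0]_(m : M) suspX (Q_ m) j.
lra.
Qed.
End PriorStep.

Lemma potential_nonpos (n : nat) (XT M : finType) N :
  forall (Q : XT -> {ffun 'I_n -> bool} -> R) (pi : protocol n XT M),
  (forall x l, 0 <= Q x l) -> protocol_wf pi -> protocol_length_le pi N ->
  susp_finite Q pi -> potential Q pi N <= 0.
Proof.
elim: N => [|N IH] Q pi Q_ge0 wf len fin.
  by rewrite potential_stopped ?len //; lra.
case e: (pi [::]) => [[[i pq] px]|]; last by rewrite potential_stopped //; lra.
have [pq_dist px_dist] := wf _ _ _ _ e.
have Qm_ge0 m := update_ge0 i Q_ge0 pq_dist px_dist m.
have wf_m m : protocol_wf (after pi m) := after_wf wf.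
have len_m m : protocol_length_le (after pi m) N := after_len m len.
have fin_m m : susp_finite (update Q i pq px m) (after pi m) := susp_finite_after e fin.
have IHm m : potential (update Q i pq px m) (after pi m) N <= 0 by apply: IH.
have := prior_gap_step Q_ge0 pq_dist px_dist
  (fun m => massXi_pos (Qm_ge0 m) (wf_m m) (len_m m) (fin_m m)).
have := @sumR_le0 _ (index_enum M) xpredT _ (fun m _ => IHm m).
by rewrite /potential (post_part_step _ e) big_split /=; lra.
Qed.

Lemma xsum_fin (T : finType) (f : T -> xR) (g : T -> R) :
  (forall y, f y = Fin (g y)) -> xsum f = Fin (\big[Rplus/0]_(y : T) g y).
Proof.
move=> fg; rewrite /xsum -big_enum /=; elim: (enum T) => [|y s IH] /=.
  by rewrite big_nil.
by rewrite IH fg big_cons.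
Qed.

Lemma xsum_inf (T : finType) (f : T -> xR) y0 : f y0 = Inf -> xsum f = Inf.
Proof.
rewrite /xsum => fy0; have : y0 \in enum T by rewrite mem_enum.
elim: (enum T) => [|y s IH] //=; rewrite in_cons => /orP [/eqP <-|/IH ->].
  by rewrite fy0.
by case: (f y).
Qed.

Section JointDistribution.
Variables (n : nat) (XT M : finType) (N : nat).
Notation L := {ffun 'I_n -> bool}.
Variables (PXL : XT -> L -> R) (pi : protocol n XT M).
Hypotheses (wf : protocol_wf pi) (len : protocol_length_le pi N).
Notation P := (jointP (N := N) PXL pi).
Notation Om := (omega n XT M N).
Notation TT := (transcript M N).

Lemma prob_omega (A : pred Om) :
  prob P A = \big[Rplus/0]_(x : XT) \big[Rplus/0]_(l : L) \big[Rplus/0]_(tt : TT)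
     (if A ((x, l), tt) then PXL x l * trans_prob pi x l (tr_seq tt) else 0).
Proof.
rewrite /prob big_mkcond [RHS]pair_bigA [RHS]pair_bigA.
by apply: eq_bigr => [[[x l] tt]] _.
Qed.

Lemma sum_trans_prob x l : \big[Rplus/0]_(tt : TT) trans_prob pi x l (tr_seq tt) = 1.
Proof. by rewrite (sum_transcripts N (trans_prob pi x l)) trans_prob_sum1. Qed.

Lemma probX x0 : prob P (fun w => rvX w == x0) = massX PXL x0.
Proof.
rewrite prob_omega (@sumR_single _ x0) => [|x /negbTE hx]; last first.
  by apply: big1 => l _; apply: big1 => tt _; rewrite /rvX /= hx.
apply: eq_bigr => l _; rewrite /rvX /= eqxx -sumR_scale sum_trans_prob; ring.
Qed.

Lemma probXi i x0 : prob P (fun w => ~~ rvL i w && (rvX w == x0)) = massXi PXL i x0.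
Proof.
rewrite prob_omega (@sumR_single _ x0) => [|x /negbTE hx]; last first.
  by apply: big1 => l _; apply: big1 => tt _; rewrite /rvX /= hx andbF.
rewrite /massXi [RHS]big_mkcond; apply: eq_bigr => l _; rewrite /rvX /rvL /= eqxx andbT.
by case: (~~ l i); [rewrite -sumR_scale sum_trans_prob; ring | rewrite big1].
Qed.

Lemma probXT x0 tt0 :
  prob P (fun w => (rvX w == x0) && (rvT w == tt0)) = massXT PXL pi x0 (tr_seq tt0).
Proof.
rewrite prob_omega (@sumR_single _ x0) => [|x /negbTE hx]; last first.
  by apply: big1 => l _; apply: big1 => tt _; rewrite /rvX /= hx.
apply: eq_bigr => l _; rewrite (@sumR_single _ tt0) => [|tt /negbTE ht].
  by rewrite /rvX /rvT /= !eqxx.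
by rewrite /rvX /rvT /= ht andbF.
Qed.

Lemma probXT_pair x0 tt0 :
  prob P (fun w => rvXT w == (x0, tt0)) = massXT PXL pi x0 (tr_seq tt0).
Proof. by rewrite -probXT; apply: eq_bigl => w; rewrite /rvXT xpair_eqE. Qed.

Lemma probXTi i x0 tt0 : prob P (fun w => ~~ rvL i w && (rvXT w == (x0, tt0))) =
  massXTi PXL pi i x0 (tr_seq tt0).
Proof.
rewrite prob_omega (@sumR_single _ x0) => [|x /negbTE hx]; last first.
  by apply: big1 => l _; apply: big1 => tt _; rewrite /rvXT xpair_eqE /= hx andbF.
rewrite /massXTi [RHS]big_mkcond; apply: eq_bigr => l _ /=.
rewrite (@sumR_single _ tt0) => [|tt /negbTE ht]; last by rewrite /rvXT xpair_eqE /= ht !andbF.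
by rewrite /rvXT /rvL /= eqxx andbT.
Qed.

Lemma probT tt0 : prob P (fun w => rvT w == tt0) = massT PXL pi (tr_seq tt0).
Proof.
rewrite prob_omega; apply: eq_bigr => x _; apply: eq_bigr => l _.
rewrite (@sumR_single _ tt0) => [|tt /negbTE ht]; first by rewrite /rvT /= eqxx.
by rewrite /rvT /= ht.
Qed.
End JointDistribution.

Lemma ln2_pos : 0 < ln 2.
Proof. by have := ln_lt_2; lra. Qed.

Lemma log2_ln y : log2 y * ln 2 = ln y.
Proof. by rewrite /log2; field; have := ln2_pos; lra. Qed.

(* The theorem in real numbers, when all suspicions are finite: the terms of
   I(X;T), susp_i(X,T) and susp_i(X), rescaled to nats, are exactly those of
   the potential, whose sign is known. *)
Section FiniteCase.
Variables (n : nat) (XT M : finType) (N : nat).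
Notation L := {ffun 'I_n -> bool}.
Variables (PXL : XT -> L -> R) (pi : protocol n XT M).
Hypotheses (PXL_ge0 : forall x l, 0 <= PXL x l) (PXL_sum1 : total_mass PXL = 1).
Hypotheses (wf : protocol_wf pi) (len : protocol_length_le pi N).
Hypotheses (priorX_fin : forall i x, 0 < massX PXL x -> 0 < massXi PXL i x)
  (fin : susp_finite PXL pi).

Notation pXT := (massXT PXL pi).
Notation pXTi := (massXTi PXL pi).
Notation pT := (massT PXL pi).
Notation pX := (massX PXL).
Notation pXi := (massXi PXL).

Definition mutinf_term x t :=
  if Rlt_dec 0 (pXT x t) then pXT x t * log2 (pXT x t / (pX x * pT t)) else 0.
Definition suspXT_term i x t :=
  if Rlt_dec 0 (pXT x t) then pXT x t * - log2 (pXTi i x t / pXT x t) else 0.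
Definition suspX_term i x :=
  if Rlt_dec 0 (pX x) then pX x * - log2 (pXi i x / pX x) else 0.

Lemma mutinf_term_ln x t : mutinf_term x t * ln 2 =
  pXT x t * (ln (pXT x t) - ln (pT t)) - pXT x t * ln (pX x).
Proof.
rewrite /mutinf_term; case: Rlt_dec => h /=; last first.
  have -> : pXT x t = 0 by have := massXT_ge0 PXL_ge0 wf x t; lra.
  ring.
have hX : 0 < pX x.
  have [l [_ hl]] := sumR_pos_ex h.
  have [hl' _] := prod_pos (PXL_ge0 x l) (trans_prob_ge0 x l t wf) hl.
  by apply: (@sumR_pos _ xpredT _ l).
have hT : 0 < pT t.
  by apply: Rlt_le_trans h (@sumR_term_le _ xpredT (fun y => pXT y t) x _ _) => // y _;
    exact: massXT_ge0.
rewrite Rmult_assoc log2_ln /Rdiv ln_mult // ?ln_Rinv ?ln_mult //; try ring.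
- by apply: Rmult_lt_0_compat.
- by apply: Rinv_0_lt_compat; apply: Rmult_lt_0_compat.
Qed.

Lemma suspXT_term_ln i x t :
  suspXT_term i x t * ln 2 = pXT x t * (ln (pXT x t) - ln (pXTi i x t)).
Proof.
rewrite /suspXT_term; case: Rlt_dec => h /=; last first.
  have -> : pXT x t = 0 by have := massXT_ge0 PXL_ge0 wf x t; lra.
  ring.
have hi := fin i h.
rewrite Rmult_assoc Ropp_mult_distr_l_reverse log2_ln /Rdiv ln_mult //.
  by rewrite ln_Rinv //; ring.
by apply: Rinv_0_lt_compat.
Qed.

Lemma suspX_term_ln i x : suspX_term i x * ln 2 = pX x * (ln (pX x) - ln (pXi i x)).
Proof.
rewrite /suspX_term; case: Rlt_dec => h /=; last first.
  have -> : pX x = 0 by have := massX_ge0 PXL_ge0 x; lra.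
  ring.
have hi := priorX_fin i h.
rewrite Rmult_assoc Ropp_mult_distr_l_reverse log2_ln /Rdiv ln_mult //.
  by rewrite ln_Rinv //; ring.
by apply: Rinv_0_lt_compat.
Qed.

Lemma finite_case_ineq :
  \big[Rplus/0]_(x : XT) \big[Rplus/0]_(t <- seqs_upto M N) mutinf_term x t <=
  \big[Rplus/0]_(i < n)
    (\big[Rplus/0]_(x : XT) \big[Rplus/0]_(t <- seqs_upto M N) suspXT_term i x t
     - \big[Rplus/0]_(x : XT) suspX_term i x).
Proof.
set info := \big[Rplus/0]_(x : XT) \big[Rplus/0]_(t <- seqs_upto M N)
  (pXT x t * (ln (pXT x t) - ln (pT t))).
set susp_post := \big[Rplus/0]_(i < n) \big[Rplus/0]_(x : XT)
  \big[Rplus/0]_(t <- seqs_upto M N) (pXT x t * (ln (pXT x t) - ln (pXTi i x t))).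
have post_eq : \big[Rplus/0]_(x : XT) \big[Rplus/0]_(t <- seqs_upto M N)
    post_gap PXL pi x t = info - susp_post.
  rewrite /info /susp_post (exchange_big _ (index_enum 'I_n)) /= -sumR_sub.
  apply: eq_bigr => x _; rewrite (exchange_big _ (index_enum 'I_n)) /= -sumR_sub.
  by apply: eq_bigr => t _; rewrite /post_gap !Rmult_minus_distr_l sumR_scale.
have mutinf_eq : (\big[Rplus/0]_(x : XT) \big[Rplus/0]_(t <- seqs_upto M N)
    mutinf_term x t) * ln 2 = info - negentX PXL.
  rewrite sumR_scaler /info /negentX -sumR_sub; apply: eq_bigr => x _.
  rewrite sumR_scaler (eq_bigr _ (fun t _ => mutinf_term_ln x t)) sumR_sub.
  by rewrite -sumR_scaler (sum_massXT PXL wf x len).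
have susp_eq : (\big[Rplus/0]_(i < n)
    (\big[Rplus/0]_(x : XT) \big[Rplus/0]_(t <- seqs_upto M N) suspXT_term i x t
     - \big[Rplus/0]_(x : XT) suspX_term i x)) * ln 2 =
    susp_post - \big[Rplus/0]_(i < n) suspX PXL i.
  rewrite sumR_scaler /susp_post -sumR_sub; apply: eq_bigr => i _.
  rewrite Rmult_minus_distr_r !sumR_scaler; congr (_ - _).
  - apply: eq_bigr => x _; rewrite sumR_scaler.
    by apply: eq_bigr => t _; exact: suspXT_term_ln.
  - by apply: eq_bigr => x _; exact: suspX_term_ln.
have := potential_nonpos PXL_ge0 wf len fin.
rewrite /potential /prior_gap PXL_sum1 ln_1 Rmult_0_r Rplus_0_r post_eq => pot.
apply: (Rmult_le_reg_r (ln 2)); first exact: ln2_pos.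
by rewrite mutinf_eq susp_eq; lra.
Qed.
End FiniteCase.

Section Prior.
Variables (n : nat) (XT : finType) (PXL : XT -> {ffun 'I_n -> bool} -> R).
Notation PXL2 := (fun xl : XT * {ffun 'I_n -> bool} => PXL xl.1 xl.2).

Lemma prior_probX x : prob PXL2 (fun xl => xl.1 == x) = massX PXL x.
Proof.
rewrite /prob big_mkcond -(pair_bigA _ (fun x' l => if x' == x then PXL x' l else 0)) /=.
rewrite (@sumR_single _ x) => [|y /negbTE hy]; last by apply: big1 => l _; rewrite hy.
by apply: eq_bigr => l _; rewrite eqxx.
Qed.

Lemma prior_probXi i x :
  prob PXL2 (fun xl => ~~ xl.2 i && (xl.1 == x)) = massXi PXL i x.
Proof.
rewrite /prob big_mkcond.
rewrite -(pair_bigA _ (fun x' (l : {ffun 'I_n -> bool}) =>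
  if ~~ l i && (x' == x) then PXL x' l else 0)) /=.
rewrite (@sumR_single _ x) => [|y /negbTE hy]; last by apply: big1 => l _; rewrite hy andbF.
by rewrite /massXi [RHS]big_mkcond; apply: eq_bigr => l _; rewrite eqxx andbT.
Qed.

Lemma prior_susp_finite : (forall x l, 0 <= PXL x l) ->
  (forall i x, 0 < prob PXL2 (fun xl => xl.1 == x) ->
     0 < cprob PXL2 (fun xl => ~~ xl.2 i) (fun xl => xl.1 == x)) ->
  forall i x, 0 < massX PXL x -> 0 < massXi PXL i x.
Proof.
move=> PXL_ge0 hyp i x hx; have := hyp i x; rewrite /cprob prior_probXi prior_probX.
move=> /(_ hx); case: (Rle_lt_or_eq_dec _ _ (massXi_ge0 PXL_ge0 i x)) => // <-.
by rewrite /Rdiv Rmult_0_l; lra.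
Qed.
End Prior.

Lemma susp_at_pos (O YT : finType) (Q : O -> R) (Li : O -> bool) (Y : O -> YT) y :
  0 < cprob Q (fun w => ~~ Li w) (fun w => Y w == y) ->
  susp_at Q Li Y y = Fin (- log2 (cprob Q (fun w => ~~ Li w) (fun w => Y w == y))).
Proof. by move=> h; rewrite /susp_at; case: Req_EM_T => // e; lra. Qed.

Section InformationValues.
Variables (n : nat) (XT M : finType) (N : nat).
Variables (PXL : XT -> {ffun 'I_n -> bool} -> R) (pi : protocol n XT M).
Hypotheses (PXL_ge0 : forall x l, 0 <= PXL x l).
Hypotheses (wf : protocol_wf pi) (len : protocol_length_le pi N).
Notation P := (jointP (N := N) PXL pi).

Lemma suspX_value i : (forall x, 0 < massX PXL x -> 0 < massXi PXL i x) ->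
  susp P (rvL i) (@rvX n XT M N) = Fin (\big[Rplus/0]_(x : XT) suspX_term PXL i x).
Proof.
move=> priorX_fin; rewrite /susp (xsum_fin (g := suspX_term PXL i)) // => x /=.
rewrite probX // /suspX_term; case: Rlt_dec => h //=.
by rewrite susp_at_pos /cprob probXi // probX //; apply: Rdiv_lt_0_compat => //; exact: priorX_fin.
Qed.

Lemma suspXT_value i : susp_finite PXL pi ->
  susp P (rvL i) (@rvXT n XT M N) =
  Fin (\big[Rplus/0]_(x : XT) \big[Rplus/0]_(t <- seqs_upto M N) suspXT_term PXL pi i x t).
Proof.
move=> fin; rewrite /susp (xsum_fin (g := fun y => suspXT_term PXL pi i y.1 (tr_seq y.2))).
  rewrite -(pair_bigA _ (fun x tt => suspXT_term PXL pi i x (tr_seq tt))) /=.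
  by congr Fin; apply: eq_bigr => x _; exact: sum_transcripts.
move=> [x tt] /=; rewrite probXT_pair /suspXT_term; case: Rlt_dec => h //=.
by rewrite susp_at_pos /cprob probXTi probXT_pair //; apply: Rdiv_lt_0_compat => //; exact: fin.
Qed.

Lemma mutinf_value : mutinf P (@rvX n XT M N) (@rvT n XT M N) =
  \big[Rplus/0]_(x : XT) \big[Rplus/0]_(t <- seqs_upto M N) mutinf_term PXL pi x t.
Proof.
rewrite /mutinf (eq_bigr (fun y => mutinf_term PXL pi y.1 (tr_seq y.2))).
  rewrite -(pair_bigA _ (fun x tt => mutinf_term PXL pi x (tr_seq tt))) /=.
  by apply: eq_bigr => x _; exact: sum_transcripts.
by move=> [x tt] _ /=; rewrite probXT // probX // probT.
Qed.

Lemma suspXT_infinite : ~ susp_finite PXL pi ->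
  exists j, susp P (rvL j) (@rvXT n XT M N) = Inf.
Proof.
move=> not_fin.
have [x [j [t [hXT hXTi]]]] :
    exists x j t, 0 < massXT PXL pi x t /\ ~ 0 < massXTi PXL pi j x t.
  apply: NNPP => hn; apply: not_fin => x j t h; apply: NNPP => h2.
  by apply: hn; exists x, j, t.
have ht : (size t < N.+1)%N.
  rewrite ltnS leqNgt; apply/negP => hl; suff : massXT PXL pi x t = 0 by lra.
  by apply: big1 => l _; rewrite (trans_prob_long _ _ len hl); ring.
have hXTi0 : massXTi PXL pi j x t = 0 by have := massXTi_ge0 PXL_ge0 wf j x t; lra.
exists j; rewrite /susp (@xsum_inf _ _ (x, mk_tr ht)) //= probXT_pair.
case: Rlt_dec => //= _; rewrite /susp_at /cprob probXTi probXT_pair /= hXTi0.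
by rewrite /Rdiv Rmult_0_l; case: Req_EM_T.
Qed.
End InformationValues.

Unset Implicit Arguments.
Set Strict Implicit.

Theorem theorem3p4 (n : nat) (XT M : finType)
    (PXL : XT -> {ffun 'I_n -> bool} -> R)
    (PXL_dist : is_dist (fun xl : XT * {ffun 'I_n -> bool} => PXL xl.1 xl.2))
    (PXL_hyp : forall (i : 'I_n) (x : XT),
        0 < prob (fun xl : XT * {ffun 'I_n -> bool} => PXL xl.1 xl.2)
               (fun xl => xl.1 == x) ->
        0 < cprob (fun xl : XT * {ffun 'I_n -> bool} => PXL xl.1 xl.2)
               (fun xl => ~~ xl.2 i) (fun xl => xl.1 == x))
    (pi : protocol n XT M) (pi_wf : protocol_wf pi)
    (N : nat) (pi_len : protocol_length_le pi N) :
  let P := jointP (N := N) PXL pi in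
  xle (Fin (mutinf P (@rvX n XT M N) (@rvT n XT M N)))
      (xsum (fun i : 'I_n =>
         xsub (susp P (rvL i) (@rvXT n XT M N)) (susp P (rvL i) (@rvX n XT M N)))).
Proof.
move=> P; have [PXL_ge0' PXL_sum] := PXL_dist.
have PXL_ge0 x l : 0 <= PXL x l := PXL_ge0' (x, l).
have PXL_sum1 : total_mass PXL = 1.
  by rewrite /total_mass /massX (pair_bigA _ (fun x l => PXL x l)).
have priorX_fin := prior_susp_finite PXL_ge0 PXL_hyp.
case: (classic (susp_finite PXL pi)) => [fin | not_fin].
- have susp_values i : xsub (susp P (rvL i) (@rvXT n XT M N)) (susp P (rvL i) (@rvX n XT M N)) =
      Fin (\big[Rplus/0]_(x : XT) \big[Rplus/0]_(t <- seqs_upto M N) suspXT_term PXL pi i x t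
           - \big[Rplus/0]_(x : XT) suspX_term PXL i x).
    by rewrite suspXT_value // suspX_value //; exact: priorX_fin.
  rewrite (xsum_fin susp_values) mutinf_value //=.
  exact: finite_case_ineq PXL_ge0 PXL_sum1 pi_wf pi_len priorX_fin fin.
- have [j susp_j_inf] := suspXT_infinite PXL_ge0 pi_wf pi_len not_fin.
  by rewrite (xsum_inf (y0 := j)) //= susp_j_inf suspX_value //; exact: priorX_fin.
Qed.
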